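(* Let $\Omega\subset\mathbb{R}^d$ be a bounded domain, $\kappa\in L^\infty(\Omega)$ with $\kappa\ge\kappa_0>0$, $a(u,v)=\int_\Omega\kappa\nabla u\cdot\nabla v\,dx$, $\|u\|_a^2=a(u,u)$. Let $V_{H,1},V_{H,2}\subset H^1_0(\Omega)$ be finite-dimensional, $L^2(\Omega)$-orthogonal subspaces, and $\tau>0$. Define $(u,v)_{m_\tau}=(u,v)+\frac{\tau^2}{2}a(u,v)$, $\|v\|_{m_\tau}^2=(v,v)_{m_\tau}$, and operators $b_\tau:V_{H,1}\to V_{H,1}$, $c_\tau:V_{H,1}+V_{H,2}\to V_{H,1}$, $d_\tau:V_{H,1}+V_{H,2}\to V_{H,1}$ by $$(b_\tau(v_1),v)_{m_\tau}=(v_1,v),\quad (c_\tau(u),v)_{m_\tau}=\frac{\tau^2}{2}a(u,v),\quad a(d_\tau(u),v)=a(u,v)\qquad\forall v\in V_{H,1}.$$ Define for $v_1,v\in V_{H,1}$: $(v_1,v)_{s_\tau}=(v_1,v)-(b_\tau(v_1),b_\tau(v))_{m_\tau}$, $\|v_1\|_{s_\tau}^2=(v_1,v_1)_{s_\tau}$, and for $v_2\in V_{H,2}$: $\|v_2\|_{n_\tau}^2=\frac{\tau^2}{2}\|v_2\|_a^2-\|c_\tau(v_2)\|_{m_\tau}^2-\|d_\tau(v_2)\|_{s_\tau}^2$. Then for all $u_1\in V_{H,1}$ and $u_2\in V_{H,2}$, $$\|u_1\|^2+\frac{\tau^2}{2}\|u_2\|_a^2-\|b_\tau(u_1)-c_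\tau(u_2)\|_{m_\tau}^2=\|u_1+d_\tau(u_2)\|_{s_\tau}^2+\|u_2\|_{n_\tau}^2.$$
   Context: $(\cdot,\cdot)$ and $\|\cdot\|$ denote the $L^2(\Omega)$ inner product and norm. *)

From HB Require Import structures.
From mathcomp Require Import all_boot all_order all_algebra.
From mathcomp Require Import reals.
Set Implicit Arguments. Unset Strict Implicit. Unset Printing Implicit Defensive.
Import Order.TTheory GRing.Theory Num.Theory.
Local Open Scope ring_scope.

Section Defs.
Variables (R : realType) (H : lmodType R).

Definition sym_bilinear (f : H -> H -> R) : Prop :=
  (forall u v, f u v = f v u) /\
  (forall u v w, f (u + v) w = f u w + f v w) /\
  (forall (k : R) u v, f (k *: u) v = k * f u v).

Definition pos_def (f : H -> H -> R) : Prop :=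
  forall v, v != 0 -> 0 < f v v.

Definition fin_dim_subspace (V : H -> Prop) : Prop :=
  exists s : seq H, forall x,
    V x <-> exists c : 'I_(size s) -> R, x = \sum_(i < size s) c i *: s`_i.

Definition sum_sp (V1 V2 : H -> Prop) (x : H) : Prop :=
  exists x1 x2, [/\ V1 x1, V2 x2 & x = x1 + x2].

Definition m_ip (ip a : H -> H -> R) (tau : R) (u v : H) : R :=
  ip u v + tau ^+ 2 / 2 * a u v.

Definition s_ip (ip a : H -> H -> R) (tau : R) (b : H -> H) (v1 v : H) : R :=
  ip v1 v - m_ip ip a tau (b v1) (b v).

Definition n_norm2 (ip a : H -> H -> R) (tau : R) (b c d : H -> H) (v2 : H) : R :=
  tau ^+ 2 / 2 * a v2 v2 - m_ip ip a tau (c v2) (c v2)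
  - s_ip ip a tau b (d v2) (d v2).

End Defs.

From HB Require Import structures.
From mathcomp Require Import all_boot all_order all_algebra.
From mathcomp Require Import reals.
From mathcomp Require Import ring lra.
Set Implicit Arguments. Unset Strict Implicit.
Import Order.TTheory GRing.Theory Num.Theory.
Local Open Scope ring_scope.

(* The operators b, c, d are Riesz representers in V1 for positive definite
   forms, so they are determined by testing against V1.  This makes b additive
   and gives c u = d u - b (d u): indeed
   m (d u - b (d u)) v = m (d u) v - (d u, v) = tau^2/2 a (d u) v = tau^2/2 a u v.
   Substituting this and expanding both sides, the identity reduces to
   m (b u1) (c u2) = (u1, c u2), the defining property of b. *)

Section SymBilinear.
Variables (R : realType) (H : lmodType R) (f : H -> H -> R).
Hypothesis f_sym : sym_bilinear f.

Lemma sym_bilinearNl u v : f (- u) v = - f u v.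
Proof. by case: f_sym => _ [_ fZ]; rewrite -scaleN1r fZ mulN1r. Qed.

Lemma sym_bilinearBl u v w : f (u - v) w = f u w - f v w.
Proof. by case: f_sym => _ [fD _]; rewrite fD sym_bilinearNl. Qed.

Lemma sym_bilinearDr u v w : f u (v + w) = f u v + f u w.
Proof. by case: f_sym => fC [fD _]; rewrite fC fD (fC v) (fC w). Qed.

Lemma sym_bilinearNr u v : f u (- v) = - f u v.
Proof. by case: f_sym => fC _; rewrite fC sym_bilinearNl fC. Qed.

Lemma sym_bilinearBr u v w : f u (v - w) = f u v - f u w.
Proof. by rewrite sym_bilinearDr sym_bilinearNr. Qed.

Lemma sym_bilinear_sqrD x y : f (x + y) (x + y) = f x x + 2 * f x y + f y y.
Proof.
case: f_sym => fC [fD _].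
by rewrite fD !sym_bilinearDr (fC y x); ring.
Qed.

Lemma sym_bilinear_sqrB x y : f (x - y) (x - y) = f x x - 2 * f x y + f y y.
Proof.
by rewrite sym_bilinear_sqrD sym_bilinearNl sym_bilinearNr sym_bilinearNr opprK; ring.
Qed.

Lemma pos_def_representer_unique (V : H -> Prop) (x y : H) :
  pos_def f -> V (x - y) -> (forall v, V v -> f x v = f y v) -> x = y.
Proof.
move=> f_pos Vxy fxy; apply/eqP; rewrite -subr_eq0; apply/negPn/negP => nz_xy.
have := f_pos _ nz_xy.
by rewrite sym_bilinearBl fxy // subrr ltxx.
Qed.

End SymBilinear.

Section MassInnerProduct.
Variables (R : realType) (H : lmodType R) (ip a : H -> H -> R) (tau : R).

Lemma m_ip_sym_bilinear :
  sym_bilinear ip -> sym_bilinear a -> sym_bilinear (m_ip ip a tau).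
Proof.
move=> [ipC [ipD ipZ]] [aC [aD aZ]]; rewrite /m_ip; split; [|split].
- by move=> u v; rewrite ipC aC.
- by move=> u v w; rewrite ipD aD; ring.
- by move=> k u v; rewrite ipZ aZ; ring.
Qed.

Lemma m_ip_pos_def : pos_def ip -> pos_def a -> pos_def (m_ip ip a tau).
Proof.
move=> ip_pos a_pos v nz_v; rewrite /m_ip.
have k_ge0 : 0 <= tau ^+ 2 / 2 by rewrite divr_ge0 ?sqr_ge0.
have := mulr_ge0 k_ge0 (ltW (a_pos _ nz_v)); have := ip_pos _ nz_v; lra.
Qed.

End MassInnerProduct.

Section FinDimSubspace.
Variables (R : realType) (H : lmodType R) (V : H -> Prop).
Hypothesis V_fd : fin_dim_subspace V.

Lemma fin_dim_subspace0 : V 0.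
Proof.
case: V_fd => s ->; exists (fun=> 0).
by rewrite big1 // => i _; rewrite scale0r.
Qed.

Lemma fin_dim_subspaceD x y : V x -> V y -> V (x + y).
Proof.
case: V_fd => s Vs /Vs [cx ->] /Vs [cy ->]; apply/Vs; exists (fun i => cx i + cy i).
by rewrite -big_split; apply: eq_bigr => i _; rewrite scalerDl.
Qed.

Lemma fin_dim_subspaceN x : V x -> V (- x).
Proof.
case: V_fd => s Vs /Vs [cx ->]; apply/Vs; exists (fun i => - cx i).
by rewrite -sumrN; apply: eq_bigr => i _; rewrite scaleNr.
Qed.

Lemma fin_dim_subspaceB x y : V x -> V y -> V (x - y).
Proof. by move=> Vx /fin_dim_subspaceN; apply: fin_dim_subspaceD. Qed.

End FinDimSubspace.

Section RieszOperators.
Variables (R : realType) (H : lmodType R) (ip a : H -> H -> R) (tau : R).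
Hypotheses (ip_sym : sym_bilinear ip) (ip_pos : pos_def ip).
Hypotheses (a_sym : sym_bilinear a) (a_pos : pos_def a).
Variables (V1 W : H -> Prop) (b c d : H -> H).
Hypothesis V1_fd : fin_dim_subspace V1.

Local Notation m := (m_ip ip a tau).

Hypothesis b_def : forall v1, V1 v1 ->
  V1 (b v1) /\ forall v, V1 v -> m (b v1) v = ip v1 v.
Hypothesis c_def : forall u, W u ->
  V1 (c u) /\ forall v, V1 v -> m (c u) v = tau ^+ 2 / 2 * a u v.
Hypothesis d_def : forall u, W u ->
  V1 (d u) /\ forall v, V1 v -> a (d u) v = a u v.

Let m_sym := m_ip_sym_bilinear tau ip_sym a_sym.
Let m_pos := m_ip_pos_def tau ip_pos a_pos.

Lemma riesz_b_additive x y : V1 x -> V1 y -> b (x + y) = b x + b y.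
Proof.
move=> Vx Vy; have Vxy := fin_dim_subspaceD V1_fd Vx Vy.
have [bx_in bxE] := b_def Vx; have [by_in byE] := b_def Vy.
have [bxy_in bxyE] := b_def Vxy.
apply: (pos_def_representer_unique m_sym (V := V1)) => //.
  by apply: fin_dim_subspaceB => //; apply: fin_dim_subspaceD.
move=> v Vv; case: m_sym => _ [mD _].
by rewrite bxyE // mD bxE // byE //; case: ip_sym => _ [ipD _]; rewrite ipD.
Qed.

Lemma riesz_c_eq u : W u -> c u = d u - b (d u).
Proof.
move=> Wu; have [cu_in cuE] := c_def Wu; have [du_in duE] := d_def Wu.
have [bdu_in bduE] := b_def du_in.
apply: (pos_def_representer_unique m_sym (V := V1)) => //.
  by apply: fin_dim_subspaceB => //; apply: fin_dim_subspaceB.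
move=> v Vv.
by rewrite cuE // (sym_bilinearBl m_sym) bduE // /m_ip duE //; ring.
Qed.

Lemma riesz_m_b_c u1 u : V1 u1 -> W u ->
  m (b u1) (c u) = ip u1 (d u) - m (b u1) (b (d u)).
Proof.
move=> Vu1 Wu; have [cu_in _] := c_def Wu; have [du_in _] := d_def Wu.
have [_ bu1E] := b_def Vu1; have [bdu_in _] := b_def du_in.
by rewrite !bu1E // riesz_c_eq // sym_bilinearBr.
Qed.

End RieszOperators.

Theorem mainTheorem3 (R : realType) (H : lmodType R)
  (ip : H -> H -> R) (a : H -> H -> R)
  (ip_sym : sym_bilinear ip) (ip_pos : pos_def ip)
  (a_sym : sym_bilinear a) (a_pos : pos_def a)
  (V1 V2 : H -> Prop)
  (V1_fd : fin_dim_subspace V1) (V2_fd : fin_dim_subspace V2)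
  (V12_orth : forall v1 v2, V1 v1 -> V2 v2 -> ip v1 v2 = 0)
  (tau : R) (tau_pos : 0 < tau)
  (b c d : H -> H)
  (b_def : forall v1, V1 v1 ->
     V1 (b v1) /\ forall v, V1 v -> m_ip ip a tau (b v1) v = ip v1 v)
  (c_def : forall u, sum_sp V1 V2 u ->
     V1 (c u) /\ forall v, V1 v -> m_ip ip a tau (c u) v = tau ^+ 2 / 2 * a u v)
  (d_def : forall u, sum_sp V1 V2 u ->
     V1 (d u) /\ forall v, V1 v -> a (d u) v = a u v)
  (u1 u2 : H) (u1_in : V1 u1) (u2_in : V2 u2) :
  ip u1 u1 + tau ^+ 2 / 2 * a u2 u2
    - m_ip ip a tau (b u1 - c u2) (b u1 - c u2)
  = s_ip ip a tau b (u1 + d u2) (u1 + d u2) + n_norm2 ip a tau b c d u2.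
Proof.
have u2_sum : sum_sp V1 V2 u2.
  by exists 0, u2; rewrite add0r; split => //; apply: fin_dim_subspace0.
have [du2_in _] := d_def _ u2_sum.
have m_sym := m_ip_sym_bilinear tau ip_sym a_sym.
rewrite /n_norm2 /s_ip.
rewrite (riesz_b_additive ip_sym ip_pos a_sym a_pos V1_fd b_def) //.
rewrite (sym_bilinear_sqrB m_sym) !(sym_bilinear_sqrD m_sym) (sym_bilinear_sqrD ip_sym).
rewrite (riesz_m_b_c ip_sym ip_pos a_sym a_pos V1_fd b_def c_def d_def) //.
ring.
Qed.
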